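(* Let $a>b>0$ and consider the ellipse $E:\ \frac{x^2}{a^2}+\frac{y^2}{b^2}=1$. For a point $A$ of the plane let $n(A)$ denote the number of points $B\in E$ such that $A$ lies on the normal line to $E$ at $B$. Put $$x_0=\sqrt{\frac{a^4(a^2-2b^2)^3}{(a^2-b^2)(a^2+b^2)^3}},\qquad y_0=\sqrt{\frac{b^4(2a^2-b^2)^3}{(a^2-b^2)(a^2+b^2)^3}}.$$ Then: (1) If $a^2>2b^2$, the four points $(\pm x_0,\pm y_0)$ (all sign combinations) lie on $E$ and divide $E$ into four arcs such that $n(A)=4$ for the points $A$ of some of these arcs and $n(A)=2$ for the points $A$ of the others. (2) If $a^2\le 2b^2$, then $n(A)=2$ for every point $A\in E$.
   Context: For $A\in E$ the point $B=A$ itself is counted in $n(A)$. The points $(\pm x_0,\pm y_0)$ are the intersection points of $E$ with the astroid $\sqrt[3]{a^2X^2}+\sqrt[3]{b^2Y^2}=\sqrt[3]{(a^2-b^2)^2}$ (the evolute of $E$). *)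

From Stdlib Require Import Reals List.
Open Scope R_scope.

Definition pt := (R * R)%type.

Definition on_ellipse (a b : R) (P : pt) : Prop :=
  fst P ^ 2 / a ^ 2 + snd P ^ 2 / b ^ 2 = 1.

(* A lies on the normal line to E at B = (u,v): the line through B with
   direction the gradient (u/a^2, v/b^2) of x^2/a^2 + y^2/b^2. *)
Definition on_normal (a b : R) (B A : pt) : Prop :=
  exists t : R, fst A = fst B + t * (fst B / a ^ 2)
             /\ snd A = snd B + t * (snd B / b ^ 2).

Definition normal_count (a b : R) (A : pt) (k : nat) : Prop :=
  exists l : list pt, NoDup l /\ length l = k /\
    (forall B : pt, In B l <-> (on_ellipse a b B /\ on_normal a b B A)).

Definition x0 (a b : R) : R :=
  sqrt (a ^ 4 * (a ^ 2 - 2 * b ^ 2) ^ 3 / ((a ^ 2 - b ^ 2) * (a ^ 2 + b ^ 2) ^ 3)).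
Definition y0 (a b : R) : R :=
  sqrt (b ^ 4 * (2 * a ^ 2 - b ^ 2) ^ 3 / ((a ^ 2 - b ^ 2) * (a ^ 2 + b ^ 2) ^ 3)).

(* The four open arcs into which the points (+-x0, +-y0) divide E. *)
Definition arc_top (a b : R) (A : pt) : Prop :=
  on_ellipse a b A /\ 0 < snd A /\ Rabs (fst A) < x0 a b.
Definition arc_bottom (a b : R) (A : pt) : Prop :=
  on_ellipse a b A /\ snd A < 0 /\ Rabs (fst A) < x0 a b.
Definition arc_right (a b : R) (A : pt) : Prop :=
  on_ellipse a b A /\ 0 < fst A /\ Rabs (snd A) < y0 a b.
Definition arc_left (a b : R) (A : pt) : Prop :=
  on_ellipse a b A /\ fst A < 0 /\ Rabs (snd A) < y0 a b.

Definition arcs (a b : R) : list (pt -> Prop) :=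
  arc_top a b :: arc_bottom a b :: arc_right a b :: arc_left a b :: nil.

Definition arc_count (a b : R) (arc : pt -> Prop) (k : nat) : Prop :=
  forall A : pt, arc A -> normal_count a b A k.

From Stdlib Require Import Reals Lra List.
Open Scope R_scope.

(* For A = (p, q) on E, a point B = (u, v) of E has A on its normal iff
   a^2 p v - b^2 q u = (a^2 - b^2) u v.  When p and q are nonzero this is linear in v, and
   substituting v into the equation of E leaves (u - p) G(u) = 0 for a cubic G whose
   discriminant is a positive multiple of (p^2 - x0^2)(p^2 - a^2).  Hence for |p| > x0 the
   cubic has a single root and n(A) = 2, while for |p| < x0 (possible only if a^2 > 2 b^2)
   the intermediate value theorem separates three roots and n(A) = 4.  The vertices of E,
   where the substitution degenerates, are counted directly, and on E the condition
   |q| < y0 means |p| > x0 because x0^2/a^2 + y0^2/b^2 = 1. *)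

Definition cubic (c3 c2 c1 c0 x : R) : R := c3 * x ^ 3 + c2 * x ^ 2 + c1 * x + c0.

Definition cubic_disc (c3 c2 c1 c0 : R) : R :=
  18 * c3 * c2 * c1 * c0 - 4 * c2 ^ 3 * c0 + c2 ^ 2 * c1 ^ 2
  - 4 * c3 * c1 ^ 3 - 27 * c3 ^ 2 * c0 ^ 2.

Definition root_list (f : R -> R) (L : list R) : Prop :=
  NoDup L /\ forall u, In u L <-> f u = 0.

Section Cubic.

Variables c3 c2 c1 c0 : R.
Hypothesis c3_neq0 : c3 <> 0.
Local Notation f := (cubic c3 c2 c1 c0).

Lemma cubic_vieta r r' : f r = 0 -> f r' = 0 -> r <> r' ->
  exists t, c2 = - c3 * (r + r' + t) /\ c1 = c3 * (r * r' + r * t + r' * t)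
         /\ c0 = - c3 * r * r' * t.
Proof.
  intros fr fr' neq.
  exists (- c2 / c3 - r - r').
  assert (e2 : c2 = - c3 * (r + r' + (- c2 / c3 - r - r'))) by (field; assumption).
  assert (e1 : c1 = - c3 * (r ^ 2 + r * r' + r' ^ 2) - c2 * (r + r')).
  { assert (h : (r - r') * (c3 * (r ^ 2 + r * r' + r' ^ 2) + c2 * (r + r') + c1) = 0).
    { transitivity (f r - f r'); [unfold cubic; ring | lra]. }
    destruct (Rmult_integral _ _ h); lra. }
  assert (e0 : c0 = - (c3 * r ^ 3 + c2 * r ^ 2 + c1 * r)) by (unfold cubic in fr; lra).
  split; [exact e2 | split].
  - rewrite e1, e2 at 1; field; assumption.
  - rewrite e0, e1, e2; field; assumption.
Qed.

Lemma cubic_disc_ge0 r r' : f r = 0 -> f r' = 0 -> r <> r' -> 0 <= cubic_disc c3 c2 c1 c0.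
Proof.
  intros fr fr' neq.
  destruct (cubic_vieta r r' fr fr' neq) as (t & -> & -> & ->).
  replace (cubic_disc _ _ _ _) with ((c3 ^ 2 * (r - r') * (r - t) * (r' - t)) ^ 2)
    by (unfold cubic_disc; ring).
  apply pow2_ge_0.
Qed.

Lemma cubic_root_list1 r : f r = 0 -> cubic_disc c3 c2 c1 c0 < 0 -> root_list f (r :: nil).
Proof.
  intros fr hdisc. split; [repeat constructor; easy |].
  intros u; split; [intros [<- | []]; exact fr |].
  intros fu. left. destruct (Req_dec r u) as [| neq]; [assumption |].
  pose proof (cubic_disc_ge0 r u fr fu neq). lra.
Qed.

Lemma cubic_root_list3 r1 r2 r3 : f r1 = 0 -> f r2 = 0 -> f r3 = 0 -> r1 < r2 < r3 ->
  root_list f (r1 :: r2 :: r3 :: nil).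
Proof.
  intros f1 f2 f3 hlt.
  destruct (cubic_vieta r1 r2 f1 f2 ltac:(lra)) as (t & e2 & e1 & e0).
  assert (hf : forall x, f x = c3 * (x - r1) * (x - r2) * (x - t))
    by (intros x; unfold cubic; rewrite e2, e1, e0; ring).
  assert (ht : t = r3).
  { destruct (Req_dec t r3) as [| neq]; [assumption | exfalso].
    revert f3; rewrite hf.
    repeat apply Rmult_integral_contrapositive_currified; (assumption || lra). }
  subst t. split.
  - repeat constructor; simpl; lra.
  - intros u; split; [simpl; intros [<- | [<- | [<- | []]]]; assumption |].
    rewrite hf. intros fu. simpl.
    destruct (Req_dec u r1); [left; congruence |].
    destruct (Req_dec u r2); [right; left; congruence |].
    destruct (Req_dec u r3); [right; right; left; congruence |].
    exfalso; revert fu.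
    repeat apply Rmult_integral_contrapositive_currified; (assumption || lra).
Qed.

End Cubic.

Lemma IVT_open (f : R -> R) x y : continuity f -> x < y -> f x * f y < 0 ->
  exists z, x < z < y /\ f z = 0.
Proof.
  intros hc hxy hsign.
  destruct (IVT_cor f x y hc ltac:(lra) ltac:(lra)) as (z & [[hx | hx] [hy | hy]] & fz);
    subst; try (rewrite fz in hsign; lra).
  exists z; auto.
Qed.

Lemma cube_root x : 0 < x -> exists c, 0 < c /\ c ^ 3 = x.
Proof.
  intros hx. exists (Rpower x (/ 3)).
  assert (hpos : 0 < Rpower x (/ 3)) by apply exp_pos.
  split; [exact hpos |].
  rewrite <- Rpower_pow, Rpower_mult by exact hpos.
  replace (/ 3 * INR 3) with 1 by (simpl; field).
  apply Rpower_1, hx.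
Qed.

Definition normal_cubic (a b p : R) : R -> R :=
  cubic ((a ^ 2 - b ^ 2) ^ 2) (- p * (a ^ 2 - b ^ 2) * (a ^ 2 + b ^ 2))
        (- a ^ 4 * (a ^ 2 - 2 * b ^ 2)) (a ^ 6 * p).

(* Solves the normal equation a^2 p v - b^2 q u = (a^2 - b^2) u v for v. *)
Definition foot_ordinate (a b p q u : R) : R := b ^ 2 * q * u / (a ^ 2 * p - (a ^ 2 - b ^ 2) * u).

Definition x0sq (a b : R) : R :=
  a ^ 4 * (a ^ 2 - 2 * b ^ 2) ^ 3 / ((a ^ 2 - b ^ 2) * (a ^ 2 + b ^ 2) ^ 3).
Definition y0sq (a b : R) : R :=
  b ^ 4 * (2 * a ^ 2 - b ^ 2) ^ 3 / ((a ^ 2 - b ^ 2) * (a ^ 2 + b ^ 2) ^ 3).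

Lemma normal_cubic_spec a b p u :
  (u - p) * normal_cubic a b p u
  = (u ^ 2 - a ^ 2) * (a ^ 2 * p - (a ^ 2 - b ^ 2) * u) ^ 2 + b ^ 4 * (a ^ 2 - p ^ 2) * u ^ 2.
Proof. unfold normal_cubic, cubic; ring. Qed.

Lemma normal_cubic_oddE a b p u : normal_cubic a b (- p) (- u) = - normal_cubic a b p u.
Proof. unfold normal_cubic, cubic; ring. Qed.

Lemma normal_cubic_at_a a b p : normal_cubic a b p a = a ^ 2 * b ^ 4 * (a + p).
Proof. unfold normal_cubic, cubic; ring. Qed.

Lemma normal_cubic_at_opp_a a b p : normal_cubic a b p (- a) = a ^ 2 * b ^ 4 * (p - a).
Proof. unfold normal_cubic, cubic; ring. Qed.

Lemma continuity_normal_cubic a b p : continuity (normal_cubic a b p).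
Proof. unfold normal_cubic, cubic; reg. Qed.

Lemma on_ellipse_sq a b u v u' v' : u' ^ 2 = u ^ 2 -> v' ^ 2 = v ^ 2 ->
  on_ellipse a b (u, v) -> on_ellipse a b (u', v').
Proof. unfold on_ellipse; cbn [fst snd]; intros -> ->; auto. Qed.

Lemma sq_lt_of_abs_lt_sqrt x X : Rabs x < sqrt X -> x ^ 2 < X.
Proof.
  intros h. destruct (Rle_or_lt X 0) as [hX | hX].
  - rewrite sqrt_neg_0 in h by exact hX. pose proof (Rabs_pos x). lra.
  - rewrite <- pow2_abs, <- (pow2_sqrt X) by lra.
    pose proof (Rabs_pos x). nra.
Qed.

Section Ellipse.

Variables a b : R.
Hypotheses (hb : 0 < b) (hab : b < a).

Let ha : 0 < a. Proof. lra. Qed.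
Let ha2 : 0 < a ^ 2. Proof. nra. Qed.
Let hb2 : 0 < b ^ 2. Proof. nra. Qed.
Let hk : 0 < a ^ 2 - b ^ 2. Proof. nra. Qed.

Lemma on_ellipse_iff u v : on_ellipse a b (u, v) <-> b ^ 2 * u ^ 2 + a ^ 2 * v ^ 2 = a ^ 2 * b ^ 2.
Proof.
  unfold on_ellipse; cbn [fst snd].
  split; intro h; [field_simplify_eq in h | field_simplify_eq]; lra.
Qed.

Lemma abscissa_sq_lt p q : on_ellipse a b (p, q) -> q <> 0 -> p ^ 2 < a ^ 2.
Proof.
  rewrite on_ellipse_iff. intros he hq.
  assert (0 < q ^ 2) by (rewrite <- Rsqr_pow2; apply Rsqr_pos_lt, hq). nra.
Qed.

Lemma on_normal_iff u v p q : on_ellipse a b (u, v) ->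
  on_normal a b (u, v) (p, q) <-> a ^ 2 * p * v - b ^ 2 * q * u = (a ^ 2 - b ^ 2) * u * v.
Proof.
  rewrite on_ellipse_iff. intros he. unfold on_normal; cbn [fst snd]. split.
  - intros (t & -> & ->). field. lra.
  - intros hn. destruct (Req_dec u 0) as [-> | hu].
    + assert (hv : v <> 0) by (intros ->; nra).
      assert (hp : p = 0) by (apply (Rmult_eq_reg_l (a ^ 2 * v)); [lra | nra]).
      subst p.
      exists ((q - v) * b ^ 2 / v). split; field; lra.
    + exists ((p - u) * a ^ 2 / u). split; [field; lra |].
      apply (Rmult_eq_reg_l (u * b ^ 2)); [| nra].
      field_simplify; lra.
Qed.

Lemma on_ellipse_foot p q u : a ^ 2 * q ^ 2 = b ^ 2 * (a ^ 2 - p ^ 2) ->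
  a ^ 2 * p - (a ^ 2 - b ^ 2) * u <> 0 ->
  on_ellipse a b (u, foot_ordinate a b p q u) <-> (u - p) * normal_cubic a b p u = 0.
Proof.
  intros hq hd. rewrite on_ellipse_iff, normal_cubic_spec. unfold foot_ordinate.
  set (d := a ^ 2 * p - (a ^ 2 - b ^ 2) * u) in *.
  assert (hd2 : 0 < d ^ 2) by (rewrite <- Rsqr_pow2; apply Rsqr_pos_lt, hd).
  assert (e : b ^ 2 * ((u ^ 2 - a ^ 2) * d ^ 2 + b ^ 4 * (a ^ 2 - p ^ 2) * u ^ 2)
              = (b ^ 2 * u ^ 2 + a ^ 2 * (b ^ 2 * q * u / d) ^ 2 - a ^ 2 * b ^ 2) * d ^ 2).
  { replace (b ^ 4 * (a ^ 2 - p ^ 2)) with (b ^ 2 * (b ^ 2 * (a ^ 2 - p ^ 2))) by ring.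
    rewrite <- hq. field. exact hd. }
  split; intro h.
  - apply (Rmult_eq_reg_l (b ^ 2)); [rewrite e, h; ring | lra].
  - apply Rminus_diag_uniq, (Rmult_eq_reg_r (d ^ 2)); [rewrite <- e, h; ring | lra].
Qed.

Lemma normal_points_iff p q u v : on_ellipse a b (p, q) -> p <> 0 -> q <> 0 ->
  (on_ellipse a b (u, v) /\ on_normal a b (u, v) (p, q)) <->
  (u, v) = (p, q) \/ (normal_cubic a b p u = 0 /\ v = foot_ordinate a b p q u).
Proof.
  intros hA hp hq.
  pose proof (abscissa_sq_lt p q hA hq) as hpa.
  assert (hq2 : a ^ 2 * q ^ 2 = b ^ 2 * (a ^ 2 - p ^ 2)) by (apply on_ellipse_iff in hA; lra).
  split.
  - intros [hB hn]. apply on_normal_iff in hn; [| exact hB].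
    assert (hd : a ^ 2 * p - (a ^ 2 - b ^ 2) * u <> 0).
    { intros hd.
      assert (hu : b ^ 2 * q * u = v * (a ^ 2 * p - (a ^ 2 - b ^ 2) * u)) by lra.
      rewrite hd, Rmult_0_r in hu.
      assert (u = 0) by (destruct (Rmult_integral _ _ hu); [nra | assumption]).
      subst u; nra. }
    assert (hv : v = foot_ordinate a b p q u)
      by (unfold foot_ordinate; field_simplify_eq; [lra | exact hd]).
    rewrite hv in hB |- *. apply on_ellipse_foot in hB; [| exact hq2 | exact hd].
    destruct (Rmult_integral _ _ hB) as [hu | hG]; [left | right; auto].
    assert (u = p) by lra. subst u. unfold foot_ordinate. f_equal. field. nra.
  - intros [[= -> ->] | [hG ->]].
    + split; [exact hA | apply on_normal_iff; [exact hA | ring]].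
    + assert (hd : a ^ 2 * p - (a ^ 2 - b ^ 2) * u <> 0).
      { intros hd. pose proof (normal_cubic_spec a b p u) as e.
        rewrite hG, hd in e.
        assert (hu : b ^ 4 * (a ^ 2 - p ^ 2) * u ^ 2 = 0) by lra.
        destruct (Rmult_integral _ _ hu) as [h | h]; [pose proof (pow_lt b 4 hb); nra |].
        assert (u = 0) by nra. subst u. nra. }
      assert (hB : on_ellipse a b (u, foot_ordinate a b p q u))
        by (apply on_ellipse_foot; [exact hq2 | exact hd | rewrite hG; ring]).
      split; [exact hB | apply on_normal_iff; [exact hB |]].
      unfold foot_ordinate. field. exact hd.
Qed.

Lemma normal_count_of_roots p q L : on_ellipse a b (p, q) -> p <> 0 -> q <> 0 ->
  root_list (normal_cubic a b p) L -> normal_count a b (p, q) (S (length L)).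
Proof.
  intros hA hp hq [hL hroots].
  assert (hGp : normal_cubic a b p p <> 0).
  { pose proof (abscissa_sq_lt p q hA hq).
    replace (normal_cubic a b p p) with (2 * b ^ 2 * p * (a ^ 4 - (a ^ 2 - b ^ 2) * p ^ 2))
      by (unfold normal_cubic, cubic; ring).
    repeat apply Rmult_integral_contrapositive_currified; (assumption || nra). }
  exists ((p, q) :: map (fun u => (u, foot_ordinate a b p q u)) L).
  split; [| split; [simpl; rewrite length_map; reflexivity |]].
  - constructor.
    + intros hin. apply in_map_iff in hin as (u & [= -> _] & hu).
      apply hroots in hu. contradiction.
    + apply NoDup_map_NoDup_ForallPairs; [| exact hL].
      intros x y _ _ e. now injection e.
  - intros [u v]. rewrite (normal_points_iff p q u v hA hp hq). cbn [In]. rewrite in_map_iff.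
    split.
    + intros [e | (w & [= -> ->] & hw)]; [left; congruence | right; split; [apply hroots |]; auto].
    + intros [e | [hG ->]]; [left; congruence | right; exists u; split; [reflexivity | apply hroots, hG]].
Qed.

Lemma x0sq_spec : (a ^ 2 - b ^ 2) * (a ^ 2 + b ^ 2) ^ 3 * x0sq a b = a ^ 4 * (a ^ 2 - 2 * b ^ 2) ^ 3.
Proof. unfold x0sq. field. split; nra. Qed.

Lemma x0sq_pos_iff : 0 < x0sq a b <-> 0 < a ^ 2 - 2 * b ^ 2.
Proof.
  pose proof x0sq_spec as e.
  set (m := a ^ 2 - 2 * b ^ 2) in *.
  assert (hK : 0 < (a ^ 2 - b ^ 2) * (a ^ 2 + b ^ 2) ^ 3)
    by (apply Rmult_lt_0_compat; [| apply pow_lt]; nra).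
  assert (0 < a ^ 4) by (apply pow_lt; lra).
  split; intros h.
  - assert (0 < m ^ 3) by nra.
    destruct (Rle_or_lt m 0); [| assumption].
    pose proof (pow2_ge_0 m). nra.
  - unfold x0sq. apply Rdiv_lt_0_compat; [| exact hK].
    apply Rmult_lt_0_compat; [lra | apply pow_lt, h].
Qed.

Lemma x0sq_lt : x0sq a b < a ^ 2.
Proof.
  pose proof x0sq_spec as e.
  assert (0 < b ^ 2 * (2 * a ^ 2 - b ^ 2)) by (apply Rmult_lt_0_compat; lra).
  set (k := a ^ 2 - b ^ 2) in *. set (s := a ^ 2 + b ^ 2) in *. set (m := a ^ 2 - 2 * b ^ 2) in *.
  assert (hK : 0 < k * s ^ 3) by (apply Rmult_lt_0_compat; [| apply pow_lt]; unfold s; lra).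
  enough (a ^ 4 * m ^ 3 < k * s ^ 3 * a ^ 2) by nra.
  replace (a ^ 4 * m ^ 3) with (a ^ 2 * (a ^ 2 * m * m ^ 2)) by ring.
  replace (k * s ^ 3 * a ^ 2) with (a ^ 2 * (k * s * s ^ 2)) by ring.
  apply Rmult_lt_compat_l; [exact ha2 |].
  assert (a ^ 2 * m < k * s) by (unfold k, s, m; nra).
  assert (m ^ 2 < s ^ 2) by (unfold m, s; nra).
  destruct (Rle_or_lt m 0).
  - assert (0 < k * s * s ^ 2) by (replace (k * s * s ^ 2) with (k * s ^ 3) by ring; exact hK).
    assert (a ^ 2 * m <= 0) by nra.
    assert (a ^ 2 * m * m ^ 2 <= 0) by (pose proof (pow2_ge_0 m); nra).
    lra.
  - apply Rmult_le_0_lt_compat; nra.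
Qed.

Lemma normal_cubic_disc p :
  cubic_disc ((a ^ 2 - b ^ 2) ^ 2) (- p * (a ^ 2 - b ^ 2) * (a ^ 2 + b ^ 2))
             (- a ^ 4 * (a ^ 2 - 2 * b ^ 2)) (a ^ 6 * p)
  = 4 * a ^ 6 * (a ^ 2 - b ^ 2) ^ 3 * (a ^ 2 + b ^ 2) ^ 3 * (p ^ 2 - x0sq a b) * (p ^ 2 - a ^ 2).
Proof. unfold cubic_disc, x0sq. field. split; nra. Qed.

Lemma normal_cubic_one_root p : p ^ 2 < a ^ 2 -> x0sq a b < p ^ 2 ->
  exists r, root_list (normal_cubic a b p) (r :: nil).
Proof.
  intros hpa hpx.
  assert (hab4 : 0 < a ^ 4 * b ^ 8) by (apply Rmult_lt_0_compat; apply pow_lt; lra).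
  destruct (IVT_open (normal_cubic a b p) (- a) a) as (r & _ & hr).
  - apply continuity_normal_cubic.
  - lra.
  - rewrite normal_cubic_at_opp_a, normal_cubic_at_a. nra.
  - exists r. apply cubic_root_list1; [nra | exact hr |].
    rewrite normal_cubic_disc.
    assert (0 < 4 * a ^ 6 * (a ^ 2 - b ^ 2) ^ 3 * (a ^ 2 + b ^ 2) ^ 3 * (p ^ 2 - x0sq a b))
      by (repeat apply Rmult_lt_0_compat; try apply pow_lt; lra).
    nra.
Qed.

(* The witness is a * g with g ^ 3 = a p / (a^2 - b^2): there the cubic factors, and a * g
   becomes a double root when p ^ 2 reaches x0sq. *)
Lemma normal_cubic_neg_value p : 0 < p -> p ^ 2 < x0sq a b ->
  exists w, 0 < w < a /\ normal_cubic a b p w < 0.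
Proof.
  intros hp hpx.
  pose proof x0sq_spec as eX.
  assert (0 < b ^ 2 * (2 * a ^ 2 - b ^ 2)) by (apply Rmult_lt_0_compat; lra).
  set (k := a ^ 2 - b ^ 2) in *. set (s := a ^ 2 + b ^ 2) in *. set (m := a ^ 2 - 2 * b ^ 2) in *.
  assert (hs : 0 < s) by (unfold s; lra).
  assert (hK : 0 < k * s ^ 3) by (apply Rmult_lt_0_compat; [| apply pow_lt]; lra).
  assert (hm : 0 < m) by (apply x0sq_pos_iff; nra).
  assert (hms : a ^ 2 * m < k * s) by (unfold k, s, m; nra).
  destruct (cube_root (a * p / k)) as (g & hg & hg3); [apply Rdiv_lt_0_compat; nra |].
  assert (ep : p = k * g ^ 3 / a) by (rewrite hg3; field; lra).
  assert (hgm : k * s * g ^ 2 < a ^ 2 * m).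
  { assert (hcube : (k * s * g ^ 2) ^ 3 < (a ^ 2 * m) ^ 3).
    { replace ((k * s * g ^ 2) ^ 3) with (a ^ 2 * (k * s ^ 3 * p ^ 2)) by (rewrite ep; field; lra).
      replace ((a ^ 2 * m) ^ 3) with (a ^ 2 * (a ^ 4 * m ^ 3)) by ring.
      apply Rmult_lt_compat_l; nra. }
    destruct (Rlt_or_le (k * s * g ^ 2) (a ^ 2 * m)) as [| hle]; [assumption | exfalso].
    pose proof (pow_incr (a ^ 2 * m) (k * s * g ^ 2) 3 ltac:(split; nra)). lra. }
  assert (hg1 : g < 1).
  { assert (0 < k * s) by (apply Rmult_lt_0_compat; lra).
    assert (g ^ 2 < 1) by nra. nra. }
  exists (a * g). split; [split; nra |].
  replace (normal_cubic a b p (a * g))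
    with (- (a * g) * ((k * g ^ 2 - a ^ 2) * (k * s * g ^ 2 - a ^ 2 * m)))
    by (rewrite ep; unfold normal_cubic, cubic, k, s, m; field; lra).
  assert (k * g ^ 2 < a ^ 2) by (unfold k, s, m in *; nra).
  assert (0 < (a ^ 2 - k * g ^ 2) * (a ^ 2 * m - k * s * g ^ 2)) by (apply Rmult_lt_0_compat; lra).
  assert (0 < a * g) by (apply Rmult_lt_0_compat; lra).
  nra.
Qed.

Lemma normal_cubic_three_roots_pos p : 0 < p -> p ^ 2 < x0sq a b ->
  exists r1 r2 r3, r1 < r2 < r3 /\ normal_cubic a b p r1 = 0
                   /\ normal_cubic a b p r2 = 0 /\ normal_cubic a b p r3 = 0.
Proof.
  intros hp hpx.
  destruct (normal_cubic_neg_value p hp hpx) as (w & hw & hGw).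
  pose proof x0sq_lt.
  assert (hab4 : 0 < a ^ 2 * b ^ 4) by (apply Rmult_lt_0_compat; apply pow_lt; lra).
  assert (hGma : normal_cubic a b p (- a) < 0) by (rewrite normal_cubic_at_opp_a; nra).
  assert (hG0 : 0 < normal_cubic a b p 0).
  { replace (normal_cubic a b p 0) with (a ^ 6 * p) by (unfold normal_cubic, cubic; ring).
    apply Rmult_lt_0_compat; [apply pow_lt |]; lra. }
  assert (hGa : 0 < normal_cubic a b p a) by (rewrite normal_cubic_at_a; nra).
  pose proof (continuity_normal_cubic a b p) as hc.
  destruct (IVT_open _ (- a) 0 hc) as (r1 & hr1 & e1); [lra | nra |].
  destruct (IVT_open _ 0 w hc) as (r2 & hr2 & e2); [lra | nra |].
  destruct (IVT_open _ w a hc) as (r3 & hr3 & e3); [lra | nra |].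
  exists r1, r2, r3. repeat split; (lra || assumption).
Qed.

Lemma normal_cubic_three_roots p : p <> 0 -> p ^ 2 < x0sq a b ->
  exists L, root_list (normal_cubic a b p) L /\ length L = 3%nat.
Proof.
  intros hp hpx.
  assert (hc3 : (a ^ 2 - b ^ 2) ^ 2 <> 0) by (apply pow_nonzero; lra).
  destruct (Rlt_or_le 0 p) as [hpos | hneg].
  - destruct (normal_cubic_three_roots_pos p hpos hpx) as (r1 & r2 & r3 & hlt & e1 & e2 & e3).
    exists (r1 :: r2 :: r3 :: nil). split; [apply cubic_root_list3; assumption | reflexivity].
  - assert (hpx' : (- p) ^ 2 < x0sq a b) by (replace ((- p) ^ 2) with (p ^ 2) by ring; exact hpx).
    destruct (normal_cubic_three_roots_pos (- p) ltac:(lra) hpx')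
      as (r1 & r2 & r3 & hlt & e1 & e2 & e3).
    assert (hodd : forall r, normal_cubic a b (- p) r = 0 -> normal_cubic a b p (- r) = 0).
    { intros r hr. rewrite <- (Ropp_involutive p), normal_cubic_oddE, hr. ring. }
    exists (- r3 :: - r2 :: - r1 :: nil). split; [| reflexivity].
    apply cubic_root_list3; [exact hc3 | apply hodd; assumption .. | lra].
Qed.

Lemma normal_count_major_vertex p : on_ellipse a b (p, 0) -> normal_count a b (p, 0) 2.
Proof.
  intros hA.
  assert (hp : p ^ 2 = a ^ 2) by (apply on_ellipse_iff in hA; nra).
  exists ((a, 0) :: (- a, 0) :: nil). split; [| split; [reflexivity |]].
  - constructor; [simpl; intros [[=] | []]; lra | repeat constructor; easy].
  - intros [u v]; cbn [In]. split.
    + intros [[= <- <-] | [[= <- <-] | []]];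
        (split; [| apply on_normal_iff; [| ring]]); apply on_ellipse_iff; ring.
    + intros [hB hn]. apply on_normal_iff in hn; [| exact hB]. apply on_ellipse_iff in hB.
      assert (hv : v = 0).
      { destruct (Req_dec v 0) as [| hv]; [assumption | exfalso].
        assert (hu : (a ^ 2 - b ^ 2) * u = a ^ 2 * p)
          by (apply (Rmult_eq_reg_r v); [lra | exact hv]).
        assert (hu2 : u ^ 2 <= a ^ 2) by nra.
        assert ((a ^ 2 - b ^ 2) ^ 2 * u ^ 2 = a ^ 4 * a ^ 2).
        { replace ((a ^ 2 - b ^ 2) ^ 2 * u ^ 2) with (((a ^ 2 - b ^ 2) * u) ^ 2) by ring.
          rewrite hu. replace (a ^ 4 * a ^ 2) with (a ^ 4 * p ^ 2) by (rewrite hp; ring). ring. }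
        assert ((a ^ 2 - b ^ 2) ^ 2 < a ^ 4) by nra.
        assert ((a ^ 2 - b ^ 2) ^ 2 * u ^ 2 <= (a ^ 2 - b ^ 2) ^ 2 * a ^ 2)
          by (apply Rmult_le_compat_l; [apply pow2_ge_0 | exact hu2]).
        nra. }
      subst v.
      assert (hu : u² = a²) by (rewrite !Rsqr_pow2; nra).
      destruct (Rsqr_eq _ _ hu) as [-> | ->]; auto.
Qed.

Lemma normal_points_minor_vertex q u v : on_ellipse a b (0, q) ->
  (on_ellipse a b (u, v) /\ on_normal a b (u, v) (0, q)) <->
  (u = 0 /\ v ^ 2 = b ^ 2)
  \/ (v = - b ^ 2 * q / (a ^ 2 - b ^ 2) /\ (a ^ 2 - b ^ 2) ^ 2 * u ^ 2 = a ^ 4 * (a ^ 2 - 2 * b ^ 2)).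
Proof.
  intros hA.
  assert (hq : q ^ 2 = b ^ 2) by (apply on_ellipse_iff in hA; nra).
  split.
  - intros [hB hn]. apply on_normal_iff in hn; [| exact hB]. apply on_ellipse_iff in hB.
    destruct (Req_dec u 0) as [-> | hu]; [left; split; [reflexivity | nra] | right].
    assert (hv : v = - b ^ 2 * q / (a ^ 2 - b ^ 2)).
    { apply (Rmult_eq_reg_l ((a ^ 2 - b ^ 2) * u)); [| apply Rmult_integral_contrapositive_currified; lra].
      field_simplify; lra. }
    split; [exact hv |].
    apply (Rmult_eq_reg_l (b ^ 2)); [| lra].
    replace (b ^ 2 * ((a ^ 2 - b ^ 2) ^ 2 * u ^ 2))
      with ((a ^ 2 - b ^ 2) ^ 2 * (a ^ 2 * b ^ 2 - a ^ 2 * v ^ 2)) by (rewrite <- hB; ring).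
    replace (v ^ 2) with (b ^ 4 * q ^ 2 / (a ^ 2 - b ^ 2) ^ 2) by (rewrite hv; field; lra).
    rewrite hq. field. lra.
  - assert (hnorm : forall u v, on_ellipse a b (u, v) -> a ^ 2 * 0 * v - b ^ 2 * q * u = (a ^ 2 - b ^ 2) * u * v ->
                    on_ellipse a b (u, v) /\ on_normal a b (u, v) (0, q))
      by (intros u' v' hB hn; split; [exact hB | apply on_normal_iff; assumption]).
    intros [[-> hv] | [-> hu]].
    + apply hnorm; [apply on_ellipse_iff; nra | ring].
    + apply hnorm; [apply on_ellipse_iff | field; lra].
      replace (b ^ 2 * u ^ 2 + a ^ 2 * (- b ^ 2 * q / (a ^ 2 - b ^ 2)) ^ 2)
        with ((b ^ 2 * ((a ^ 2 - b ^ 2) ^ 2 * u ^ 2) + a ^ 2 * b ^ 4 * q ^ 2) / (a ^ 2 - b ^ 2) ^ 2)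
        by (field; lra).
      rewrite hu, hq. field. lra.
Qed.

Lemma normal_count_minor_vertex_low q : on_ellipse a b (0, q) -> a ^ 2 <= 2 * b ^ 2 ->
  normal_count a b (0, q) 2.
Proof.
  intros hA hm.
  exists ((0, b) :: (0, - b) :: nil). split; [| split; [reflexivity |]].
  - constructor; [simpl; intros [[=] | []]; lra | repeat constructor; easy].
  - intros [u v]. split.
    + intros hin. apply (normal_points_minor_vertex q u v hA). left.
      destruct hin as [[= <- <-] | [[= <- <-] | []]]; split; ring.
    + intros hB. assert (hE : on_ellipse a b (u, v)) by apply hB.
      apply (normal_points_minor_vertex q u v hA) in hB.
      assert (hu : u = 0).
      { destruct hB as [[hu _] | [_ hu]]; [exact hu |].
        assert (0 < (a ^ 2 - b ^ 2) ^ 2) by (apply pow_lt; lra).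
        assert (a ^ 4 * (a ^ 2 - 2 * b ^ 2) <= 0) by (pose proof (pow_lt a 4 ha); nra).
        assert (u ^ 2 <= 0) by nra.
        nra. }
      subst u. apply on_ellipse_iff in hE.
      assert (hv : v² = b²) by (rewrite !Rsqr_pow2; nra).
      destruct (Rsqr_eq _ _ hv) as [-> | ->]; simpl; auto.
Qed.

Lemma normal_count_minor_vertex_high q : on_ellipse a b (0, q) -> 2 * b ^ 2 < a ^ 2 ->
  normal_count a b (0, q) 4.
Proof.
  intros hA hm.
  set (w := a ^ 2 * sqrt (a ^ 2 - 2 * b ^ 2) / (a ^ 2 - b ^ 2)).
  assert (hw : 0 < w).
  { apply Rdiv_lt_0_compat; [apply Rmult_lt_0_compat; [| apply sqrt_lt_R0] |]; lra. }
  assert (hw2 : (a ^ 2 - b ^ 2) ^ 2 * w ^ 2 = a ^ 4 * (a ^ 2 - 2 * b ^ 2)).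
  { unfold w. replace (_ * _) with (a ^ 4 * sqrt (a ^ 2 - 2 * b ^ 2) ^ 2) by (field; lra).
    rewrite pow2_sqrt by lra. reflexivity. }
  set (v1 := - b ^ 2 * q / (a ^ 2 - b ^ 2)).
  exists ((0, b) :: (0, - b) :: (w, v1) :: (- w, v1) :: nil).
  split; [| split; [reflexivity |]].
  - constructor; [simpl; intros [[=] | [[=] | [[=] | []]]]; lra |].
    constructor; [simpl; intros [[=] | [[=] | []]]; lra |].
    constructor; [simpl; intros [[=] | []]; lra | repeat constructor; easy].
  - intros [u v]. rewrite (normal_points_minor_vertex q u v hA). cbn [In]. split.
    + intros [[= <- <-] | [[= <- <-] | [[= <- <-] | [[= <- <-] | []]]]];
        [left; split; ring | left; split; ring
        | right; split; [reflexivity | exact hw2]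
        | right; split; [reflexivity | rewrite <- hw2; ring]].
    + intros [[-> hv] | [-> hu]].
      * rewrite <- !Rsqr_pow2 in hv. destruct (Rsqr_eq _ _ hv) as [-> | ->]; auto.
      * assert (hu2 : u² = w²).
        { rewrite !Rsqr_pow2. apply (Rmult_eq_reg_l ((a ^ 2 - b ^ 2) ^ 2)); [| apply pow_nonzero; lra].
          rewrite hu, hw2. reflexivity. }
        destruct (Rsqr_eq _ _ hu2) as [-> | ->]; auto.
Qed.

Lemma normal_count_lt_x0sq p q : on_ellipse a b (p, q) -> p ^ 2 < x0sq a b ->
  normal_count a b (p, q) 4.
Proof.
  intros hA hpx. pose proof x0sq_lt.
  destruct (Req_dec p 0) as [-> | hp].
  - apply normal_count_minor_vertex_high; [exact hA |].
    enough (0 < a ^ 2 - 2 * b ^ 2) by lra. apply x0sq_pos_iff. nra.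
  - assert (hq : q <> 0) by (intros ->; apply on_ellipse_iff in hA; nra).
    destruct (normal_cubic_three_roots p hp hpx) as (L & hL & hlen).
    replace 4%nat with (S (length L)) by (rewrite hlen; reflexivity).
    apply normal_count_of_roots; assumption.
Qed.

Lemma normal_count_gt_x0sq p q : on_ellipse a b (p, q) -> p <> 0 -> x0sq a b < p ^ 2 ->
  normal_count a b (p, q) 2.
Proof.
  intros hA hp hpx.
  destruct (Req_dec q 0) as [-> | hq]; [apply normal_count_major_vertex, hA |].
  destruct (normal_cubic_one_root p (abscissa_sq_lt p q hA hq) hpx) as (r & hr).
  exact (normal_count_of_roots p q (r :: nil) hA hp hq hr).
Qed.

Lemma x0sq_y0sq : b ^ 2 * x0sq a b + a ^ 2 * y0sq a b = a ^ 2 * b ^ 2.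
Proof. unfold x0sq, y0sq. field. split; nra. Qed.

Lemma y0sq_pos : 0 < y0sq a b.
Proof.
  unfold y0sq. apply Rdiv_lt_0_compat.
  - apply Rmult_lt_0_compat; apply pow_lt; nra.
  - apply Rmult_lt_0_compat; [| apply pow_lt]; nra.
Qed.

Lemma on_ellipse_x0_y0 : 2 * b ^ 2 < a ^ 2 -> on_ellipse a b (x0 a b, y0 a b).
Proof.
  intros hm. apply on_ellipse_iff.
  assert (hx : 0 < x0sq a b) by (apply x0sq_pos_iff; lra).
  pose proof y0sq_pos.
  change (x0 a b) with (sqrt (x0sq a b)). change (y0 a b) with (sqrt (y0sq a b)).
  rewrite !pow2_sqrt by lra. apply x0sq_y0sq.
Qed.

Lemma x0sq_lt_of_abs_lt_y0 p q : on_ellipse a b (p, q) -> Rabs q < y0 a b -> x0sq a b < p ^ 2.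
Proof.
  intros hA hq. apply on_ellipse_iff in hA.
  change (y0 a b) with (sqrt (y0sq a b)) in hq. apply sq_lt_of_abs_lt_sqrt in hq.
  pose proof x0sq_y0sq.
  assert (0 < a ^ 2 * (y0sq a b - q ^ 2)) by (apply Rmult_lt_0_compat; lra).
  nra.
Qed.

End Ellipse.

Theorem theorem1 (a b : R) (hb : 0 < b) (hab : b < a) :
  (a ^ 2 > 2 * b ^ 2 ->
     (on_ellipse a b (x0 a b, y0 a b) /\ on_ellipse a b (- x0 a b, y0 a b) /\
      on_ellipse a b (x0 a b, - y0 a b) /\ on_ellipse a b (- x0 a b, - y0 a b)) /\
     (forall arc, In arc (arcs a b) -> arc_count a b arc 4 \/ arc_count a b arc 2) /\
     (exists arc, In arc (arcs a b) /\ arc_count a b arc 4) /\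
     (exists arc, In arc (arcs a b) /\ arc_count a b arc 2)) /\
  (a ^ 2 <= 2 * b ^ 2 ->
     forall A : pt, on_ellipse a b A -> normal_count a b A 2).
Proof.
  split.
  - intros hm.
    assert (inner : forall arc, arc = arc_top a b \/ arc = arc_bottom a b -> arc_count a b arc 4).
    { intros arc [-> | ->]; intros [p q] (hA & _ & hp);
        apply (normal_count_lt_x0sq a b hb hab _ _ hA), sq_lt_of_abs_lt_sqrt, hp. }
    assert (outer : forall arc, arc = arc_right a b \/ arc = arc_left a b -> arc_count a b arc 2).
    { intros arc [-> | ->]; intros [p q] (hA & hp & hq); cbn [fst snd] in hp, hq;
        (apply (normal_count_gt_x0sq a b hb hab _ _ hA);
         [lra | exact (x0sq_lt_of_abs_lt_y0 a b hb hab p q hA hq)]). }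
    pose proof (on_ellipse_x0_y0 a b hb hab hm) as hE.
    split; [| split; [| split]].
    + repeat split; apply (on_ellipse_sq a b (x0 a b) (y0 a b)); (ring || exact hE).
    + simpl. intros arc [<- | [<- | [<- | [<- | []]]]]; auto.
    + exists (arc_top a b). split; [simpl; auto | auto].
    + exists (arc_right a b). split; [simpl; auto | auto].
  - intros hm [p q] hA.
    destruct (Req_dec p 0) as [-> | hp].
    + exact (normal_count_minor_vertex_low a b hb hab q hA hm).
    + apply (normal_count_gt_x0sq a b hb hab p q hA hp).
      assert (~ 0 < x0sq a b) by (rewrite (x0sq_pos_iff a b hb hab); lra).
      assert (0 < p²) by (apply Rsqr_pos_lt, hp).
      rewrite Rsqr_pow2 in *. lra.
Qed.
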